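(* Fix $p\ge1$, $v\in\mathbb{R}^p$ and a $p\times p$ matrix $Q$ that is positive definite or zero. Let $\{(X_i,Y_i)\}_{i=1}^\infty$ be random pairs with $X_i\in\mathbb{R}^p$, $Y_i\in\{0,1\}$ satisfying (A1) they are i.i.d. with $Y_i\mid X_i\sim\mathrm{Bernoulli}(G(X_i))$ for some measurable $G:\mathbb{R}^p\to(0,1)$; (A2) $\mathbb{E}X_1X_1^T$ is finite and positive definite; (A3) for every open orthant $S_j$ of $\mathbb{R}^p$ ($j=1,\dots,2^p$) and every $\beta\ne0$, $\mathbb{P}\big((1_{S_j}(X_1)+1_{S_j}(-X_1))X_1^T\beta\ne0\big)>0$. Then, almost surely, the posterior distribution based on $\{(X_i,Y_i)\}_{i=1}^n$ is proper for all sufficiently large $n$.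
   Context: The posterior based on $\{(X_i,Y_i)\}_{i=1}^n$ is the (possibly improper) density $\pi(\beta)\propto\prod_{i=1}^n\Phi(X_i^T\beta)^{Y_i}(1-\Phi(X_i^T\beta))^{1-Y_i}\exp\{-\frac12(\beta-v)^TQ(\beta-v)\}$ on $\mathbb{R}^p$, with $\Phi$ the standard normal cdf; it is proper if the right-hand side is integrable over $\mathbb{R}^p$. *)

From HB Require Import structures.
From mathcomp Require Import all_boot all_order all_algebra.
From mathcomp Require Import all_classical all_reals all_analysis.
Set Implicit Arguments. Unset Strict Implicit. Unset Printing Implicit Defensive.
Import Order.TTheory GRing.Theory Num.Theory.
Import numFieldNormedType.Exports.
Local Open Scope ring_scope.
Local Open Scope classical_set_scope.

Definition Rvec (R : realType) (p : nat) :=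
  g_sigma_algebraType (open : set_system 'rV[R]_p).

Definition posdef (R : realType) (p : nat) (M : 'M[R]_p) : Prop :=
  M^T = M /\ forall x : 'cV[R]_p, x != 0 -> 0 < (x^T *m M *m x) 0 0.

Definition Phi (R : realType) (x : R) : R :=
  fine (normal_prob 0 1 `]-oo, x]).

(* The open orthant of R^p with sign pattern s (s k = true : k-th coordinate
   positive, false : negative); the 2^p open orthants are the orthant s. *)
Definition orthant (R : realType) (p : nat) (s : 'I_p -> bool) : set 'rV[R]_p :=
  [set x | forall k, if s k then 0 < x 0 k else x 0 k < 0].

(* Iterated Lebesgue integral over R^n of a function of coordinates
   b 0, ..., b (n-1).  For nonnegative measurable integrands this is (Tonelli)
   the Lebesgue integral over R^n. *)
Fixpoint iter_leb_int (R : realType) (n : nat) (f : (nat -> R) -> \bar R)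
  : \bar R :=
  match n with
  | 0 => f (fun _ => 0)
  | n'.+1 => (\int[lebesgue_measure]_(x in [set: R])
                iter_leb_int n' (fun b => f (fun k => if k == n' then x else b k)))%E
  end.

Definition leb_int_Rp (R : realType) (p : nat) (g : 'cV[R]_p -> \bar R) : \bar R :=
  iter_leb_int p (fun b => g (\col_(k < p) b (nat_of_ord k))).

(* Unnormalized probit posterior density based on the first n data points
   (X_1,Y_1),...,(X_n,Y_n) (indices 0..n-1 here), with Y_i in {0,1}:
   prod_i Phi(X_i^T b)^{Y_i} (1 - Phi(X_i^T b))^{1 - Y_i}
          * exp(-1/2 (b - v)^T Q (b - v)). *)
Definition probit_post (R : realType) (p : nat) (Xs : nat -> 'rV[R]_p)
  (Ys : nat -> R) (v : 'cV[R]_p) (Q : 'M[R]_p) (n : nat) (b : 'cV[R]_p) : R :=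
  (\prod_(i < n)
     (if Ys i == 1 then Phi ((Xs i *m b) 0 0) else 1 - Phi ((Xs i *m b) 0 0)))
  * expR (- (((b - v)^T *m Q *m (b - v)) 0 0) / 2).

Definition posterior_proper (R : realType) (p : nat) (Xs : nat -> 'rV[R]_p)
  (Ys : nat -> R) (v : 'cV[R]_p) (Q : 'M[R]_p) (n : nat) : Prop :=
  (leb_int_Rp (fun b => (probit_post Xs Ys v Q n b)%:E) < +oo)%E.

Definition indep_seq d (T : measurableType d) (R : realType) (P : probability T R)
  d' (U : measurableType d') (Z : nat -> T -> U) : Prop :=
  forall (I : seq nat) (B : nat -> set U), uniq I ->
    (forall i, measurable (B i)) ->
    P (\bigcap_(i in [set` I]) (Z i @^-1` B i)) = (\prod_(i <- I) P (Z i @^-1` B i))%E.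

Definition ident_distr d (T : measurableType d) (R : realType) (P : probability T R)
  d' (U : measurableType d') (Z : nat -> T -> U) : Prop :=
  forall i (B : set U), measurable B -> P (Z i @^-1` B) = P (Z 0 @^-1` B).

From HB Require Import structures.
From mathcomp Require Import all_boot all_order all_algebra.
From mathcomp Require Import all_classical all_reals all_analysis.
From mathcomp Require Import ring lra.
From mathcomp Require Import measurable_realfun normal_distribution.
Set Implicit Arguments.
Unset Strict Implicit.
Unset Printing Implicit Defensive.
Import Order.TTheory GRing.Theory Num.Theory.
Import numFieldNormedType.Exports.
Local Open Scope ring_scope.
Local Open Scope classical_set_scope.

(* Put z_i := (2 Y_i - 1) X_i.  If z_i lies in the open orthant of sign pattern
   opposite to that of beta, with coordinates of size at least m > 0, then
   z_i . beta <= - m |beta|_1, so the i-th likelihood factor is a Gaussian tail,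
   at most exp (- m^2 |beta|^2 / 2), while the other factors and the prior
   kernel are at most 1.  Hence once the z_i, i < n, meet all 2^p open orthants
   the posterior kernel is dominated by an integrable Gaussian.  By (A3), X_1 or
   - X_1 lies in a given orthant with positive probability, and as 0 < G < 1 so
   does z_1 (through Y_1 = 1 resp. Y_1 = 0); by independence some z_i then
   almost surely lies in it, and there are finitely many orthants. *)

Section iterated_integral.
Context {R : realType}.
Local Open Scope ereal_scope.
Notation mu := (@lebesgue_measure R).

Lemma ge0_le_integralT (f g : R -> \bar R) :
  (forall x, 0 <= f x) -> (forall x, f x <= g x) ->
  \int[mu]_(x in [set: R]) f x <= \int[mu]_(x in [set: R]) g x.
Proof.
move=> f0 fg; have g0 x : 0 <= g x := le_trans (f0 x) (fg x).
rewrite !ge0_integralTE//; apply: ge_ereal_sup => _ [h hf <-].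
by apply: ereal_sup_ubound; exists h => //= x; exact: le_trans (hf x) (fg x).
Qed.

Lemma iter_leb_int_ge0 n (f : (nat -> R) -> \bar R) :
  (forall b, 0 <= f b) -> 0 <= iter_leb_int n f.
Proof.
elim: n f => [|n IH] f f0 /=; first exact: f0.
by apply: integral_ge0 => x _; apply: IH.
Qed.

Lemma le_iter_leb_int n (f g : (nat -> R) -> \bar R) :
  (forall b, 0 <= f b) -> (forall b, f b <= g b) ->
  iter_leb_int n f <= iter_leb_int n g.
Proof.
elim: n f g => [|n IH] f g f0 fg /=; first exact: fg.
apply: ge0_le_integralT => x; first exact: iter_leb_int_ge0.
exact: IH.
Qed.

Lemma iter_leb_int_prod n (h : R -> R) (I c : R) :
  (forall x, 0 <= h x)%R -> measurable_fun setT h ->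
  \int[mu]_x (h x)%:E = I%:E -> (0 <= c)%R ->
  iter_leb_int n (fun b => (c * \prod_(k < n) h (b k))%:E) = (c * I ^+ n)%:E.
Proof.
move=> h0 mh hI; elim: n c => [|n IH] c c0 /=.
  by rewrite big_ord0 expr0.
have I0 : (0 <= I)%R by rewrite -lee_fin -hI; apply: integral_ge0 => x _; rewrite lee_fin.
transitivity (\int[mu]_(x in [set: R]) ((c * I ^+ n)%:E * (h x)%:E)).
  apply: eq_integral => x _; rewrite -EFinM mulrAC -IH ?mulr_ge0//.
  congr iter_leb_int; apply: funext => b; congr EFin.
  rewrite big_ord_recr /= eqxx -mulrA [(h x * _)%R]mulrC; congr (_ * (_ * _))%R.
  by apply: eq_bigr => k _; rewrite ifF // (ltn_eqF (ltn_ord k)).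
rewrite ge0_integralZl ?hI -?EFinM ?exprSr ?mulrA//.
- exact/measurable_EFinP.
- by move=> x _; rewrite lee_fin.
- by rewrite lee_fin mulr_ge0// exprn_ge0.
Qed.

End iterated_integral.

Section gaussian.
Context {R : realType}.
Notation mu := (@lebesgue_measure R).

Lemma integral_normal_fun (s : R) : s != 0 ->
  (\int[mu]_x (normal_fun 0 s x)%:E = (normal_peak s)^-1%:E)%E.
Proof.
move=> s0; have pk0 := normal_peak_gt0 s0.
transitivity (\int[mu]_x ((normal_peak s)^-1%:E * (normal_pdf 0 s x)%:E))%E.
  by apply: eq_integral => x _; rewrite normal_pdfE// -EFinM mulKf ?gt_eqF.
rewrite ge0_integralZl ?integral_normal_pdf ?mule1//.
- apply/measurable_EFinP; exact: measurable_normal_pdf.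
- by move=> x _; rewrite lee_fin normal_pdf_ge0.
- by rewrite lee_fin invr_ge0 ltW.
Qed.

(* On [A] the standard Gaussian density is at most [expR (- t ^+ 2 / 2)] times
   the Gaussian density of mean [t]. *)
Lemma normal_prob_le_expR (A : set R) (t : R) : measurable A ->
  (forall x, A x -> 0 <= t * (x - t)) ->
  (normal_prob 0 1 A <= (expR (- t ^+ 2 / 2))%:E)%E.
Proof.
move=> mA At; set c := expR _.
have mpdf m : measurable_fun A (fun x => (normal_pdf m 1 x : R)%:E).
  by apply/measurable_EFinP; apply: measurable_funTS; exact: measurable_normal_pdf.
apply: (@le_trans _ _ (\int[mu]_(x in A) (c%:E * (normal_pdf t 1 x)%:E))%E).
  apply: ge0_le_integral => //.
  - by move=> x _; rewrite lee_fin normal_pdf_ge0.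
  - exact: mpdf.
  - exact: (measurable_funeM _ (mpdf t)).
  move=> x /At xt; rewrite -EFinM lee_fin !normal_pdfE ?oner_neq0 //=.
  rewrite /normal_fun mulrCA ler_wpM2l ?normal_peak_ge0// -expRD ler_expR.
  rewrite expr1n subr0 -[1 *+ 2]/2; nra.
rewrite ge0_integralZl ?lee_fin ?expR_ge0//; last 2 first.
- exact: mpdf.
- by move=> x _; rewrite lee_fin normal_pdf_ge0.
rewrite -[leRHS]mule1 lee_wpmul2l ?lee_fin ?expR_ge0// -(integral_normal_pdf t 1).
apply: ge0_subset_integral => //; first by apply/measurable_EFinP; exact: measurable_normal_pdf.
by move=> x _; rewrite lee_fin normal_pdf_ge0.
Qed.

Lemma Phi_ge0 (t : R) : 0 <= Phi t.
Proof. exact/fine_ge0/measure_ge0. Qed.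

Lemma Phi_le1 (t : R) : Phi t <= 1.
Proof. by rewrite /Phi -lee_fin fineK ?fin_num_measure ?probability_le1. Qed.

Lemma Phi_le_expR (t : R) : t <= 0 -> Phi t <= expR (- t ^+ 2 / 2).
Proof.
move=> t0; rewrite /Phi -lee_fin fineK ?fin_num_measure//.
by apply: normal_prob_le_expR => // x; rewrite /= in_itv /=; nra.
Qed.

Lemma onem_Phi_le_expR (t : R) : 0 <= t -> 1 - Phi t <= expR (- t ^+ 2 / 2).
Proof.
move=> t0; rewrite /Phi; set A := (X in normal_prob 0 1 X).
have mA : measurable A by exact: measurable_itv.
have mAC : measurable (~` A) by exact: measurableC.
have -> : normal_prob 0 1 A = (1 - normal_prob 0 1 (~` A))%E.
  by rewrite -probability_setC ?setCK.
rewrite fineB ?fin_num_measure// opprB addrC subrK -lee_fin fineK ?fin_num_measure//.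
apply: normal_prob_le_expR => //.
by move=> x; rewrite /A /= in_itv /= => /negP; rewrite -ltNge; nra.
Qed.

End gaussian.

Section orthant.
Context {R : realType} {p : nat}.

Lemma orthant_neq0 (s : 'I_p -> bool) (x : 'rV[R]_p) k : orthant s x -> x 0 k != 0.
Proof. by move=> /(_ k); case: (s k) => [/gt_eqF|/lt_eqF] ->. Qed.

Lemma orthantN (s : 'I_p -> bool) :
  [set x : 'rV[R]_p | orthant s (- x)] = orthant (negb \o s).
Proof.
apply/seteqP; split => x /= xs k; have := xs k; rewrite mxE /=;
  by case: (s k); rewrite ?oppr_gt0 ?oppr_lt0.
Qed.

Lemma orthant_indicator_neq0 (s : 'I_p -> bool) (x : 'rV[R]_p) (k : 'I_p) :
  (\1_(orthant s) x + \1_(orthant s) (- x)) * (x *m (delta_mx k 0 : 'cV_p)) 0 0 != 0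
  <-> orthant s x \/ orthant s (- x).
Proof.
have xk : orthant s x \/ orthant s (- x) -> x 0 k != 0.
  by case=> xs; have := orthant_neq0 k xs; rewrite ?mxE ?oppr_eq0.
have two : 1 + 1 != 0 :> R by rewrite paddr_eq0 ?ler01 // oner_eq0.
rewrite -colE mxE mulf_eq0 negb_or !indicE.
have [xs|xs] := pselect (orthant s x); have [nxs|nxs] := pselect (orthant s (- x));
  rewrite ?(mem_set xs) ?(memNset xs) ?(mem_set nxs) ?(memNset nxs);
  rewrite ?addr0 ?add0r ?two ?oner_eq0 ?eqxx /=.
- by split=> [_|]; [left|exact: xk].
- by split=> [_|]; [left|exact: xk].
- by split=> [_|]; [right|exact: xk].
- by split=> // -[].
Qed.

End orthant.

Section probit_likelihood.
Context {R : realType} {p : nat}.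

Definition signed_row (y : R) (x : 'rV[R]_p) : 'rV[R]_p :=
  if y == 1 then x else - x.

Definition probit_lik (y t : R) : R := if y == 1 then Phi t else 1 - Phi t.

Lemma probit_lik_ge0 y t : 0 <= probit_lik y t.
Proof. by rewrite /probit_lik; case: ifP; rewrite ?subr_ge0 ?Phi_ge0 ?Phi_le1. Qed.

Lemma probit_lik_le1 y t : probit_lik y t <= 1.
Proof. by rewrite /probit_lik; case: ifP; rewrite ?Phi_le1 // lerBlDr lerDl Phi_ge0. Qed.

Lemma probit_lik_le_expR y (x : 'rV[R]_p) (b : 'cV[R]_p) :
  (signed_row y x *m b) 0 0 <= 0 ->
  probit_lik y ((x *m b) 0 0) <= expR (- ((x *m b) 0 0) ^+ 2 / 2).
Proof.
rewrite /signed_row /probit_lik; case: ifP => _; first exact: Phi_le_expR.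
by rewrite mulNmx mxE oppr_le0; exact: onem_Phi_le_expR.
Qed.

Lemma sum_sqr_le_sqr_sum n (F : 'I_n -> R) : (forall k, 0 <= F k) ->
  \sum_(k < n) F k ^+ 2 <= (\sum_(k < n) F k) ^+ 2.
Proof.
elim: n F => [|n IH] F F0; first by rewrite !big_ord0 expr0n.
rewrite !big_ord_recr /=.
have S0 : 0 <= \sum_(k < n) F (widen_ord (leqnSn n) k) by apply: sumr_ge0.
have := IH (fun k => F (widen_ord (leqnSn n) k)) (fun k => F0 _).
have := F0 ord_max; nra.
Qed.

(* On the orthant of sign pattern opposite to [b], every term of [z *m b]
   is [- `|z 0 k| * `|b k 0|]. *)
Lemma orthant_mulmx_le (z : 'rV[R]_p) (b : 'cV[R]_p) (m : R) :
  orthant [ffun k => b k 0 < 0] z -> (forall k, m <= `|z 0 k|) ->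
  (z *m b) 0 0 <= - (m * \sum_k `|b k 0|).
Proof.
move=> zo zm; rewrite mxE mulr_sumr -sumrN; apply: ler_sum => k _.
have := zo k; have := zm k; rewrite ffunE.
case: (ltrP (b k 0) 0) => bk /= zmk zk.
  by rewrite gtr0_norm // in zmk; rewrite ltr0_norm //; nra.
by rewrite ltr0_norm // in zmk; rewrite ger0_norm //; nra.
Qed.

Lemma probit_lik_le_gauss y (x : 'rV[R]_p) (b : 'cV[R]_p) (m : R) :
  0 < m -> orthant [ffun k => b k 0 < 0] (signed_row y x) ->
  (forall k, m <= `|signed_row y x 0 k|) ->
  probit_lik y ((x *m b) 0 0) <= expR (- (m ^+ 2 * \sum_k b k 0 ^+ 2) / 2).
Proof.
move=> m0 zo zm; set u := (signed_row y x *m b) 0 0.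
have uS := orthant_mulmx_le zo zm; fold u in uS.
have S0 : 0 <= \sum_k `|b k 0| by apply: sumr_ge0.
have SS : \sum_k b k 0 ^+ 2 <= (\sum_k `|b k 0|) ^+ 2.
  rewrite (eq_bigr (fun k => `|b k 0| ^+ 2)) => [|k _]; last by rewrite real_normK ?num_real.
  exact: sum_sqr_le_sqr_sum.
have mS0 : 0 <= m * \sum_k `|b k 0| := mulr_ge0 (ltW m0) S0.
have u2 : m ^+ 2 * \sum_k b k 0 ^+ 2 <= ((x *m b) 0 0) ^+ 2.
  have -> : ((x *m b) 0 0) ^+ 2 = u ^+ 2.
    by rewrite /u /signed_row; case: ifP; rewrite ?mulNmx ?mxE ?sqrrN.
  apply: (le_trans (ler_wpM2l (sqr_ge0 m) SS)).
  rewrite -exprMn -[u ^+ 2]sqrrN; apply: lerXn2r; rewrite ?nnegrE //; lra.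
have u0 : u <= 0 by lra.
apply: le_trans (probit_lik_le_expR u0) _.
by rewrite ler_expR; lra.
Qed.

End probit_likelihood.

Section posterior_bound.
Context {R : realType} {p : nat}.
Implicit Types (Xs : nat -> 'rV[R]_p) (Ys : nat -> R) (v : 'cV[R]_p) (Q : 'M[R]_p).

Lemma quad_form_ge0 Q (w : 'cV[R]_p) : (Q = 0 \/ posdef Q) ->
  0 <= (w^T *m Q *m w) 0 0.
Proof.
case=> [->|[_ HQ]]; first by rewrite mulmx0 mul0mx mxE.
have [->|w0] := eqVneq w 0; first by rewrite trmx0 !mul0mx mxE.
exact/ltW/HQ.
Qed.

Lemma probit_post_ge0 Xs Ys v Q n b : 0 <= probit_post Xs Ys v Q n b.
Proof.
by rewrite mulr_ge0 ?expR_ge0 //; apply: prodr_ge0 => i _; exact: probit_lik_ge0.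
Qed.

Lemma probit_post_le_gauss Xs Ys v Q n (b : 'cV[R]_p) i m :
  (Q = 0 \/ posdef Q) -> 0 < m -> (i < n)%N ->
  orthant [ffun k => b k 0 < 0] (signed_row (Ys i) (Xs i)) ->
  (forall k, m <= `|signed_row (Ys i) (Xs i) 0 k|) ->
  probit_post Xs Ys v Q n b <= expR (- (m ^+ 2 * \sum_k b k 0 ^+ 2) / 2).
Proof.
move=> HQ m0 ilt zo zm; rewrite /probit_post.
have prior_le1 : expR (- ((b - v)^T *m Q *m (b - v)) 0 0 / 2) <= 1.
  by rewrite expR_le1 mulNr oppr_le0 divr_ge0 // quad_form_ge0.
have lik0 : 0 <= \prod_(j < n) probit_lik (Ys j) ((Xs j *m b) 0 0).
  by apply: prodr_ge0 => j _; exact: probit_lik_ge0.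
apply: le_trans (ler_piMr lik0 prior_le1) _.
rewrite (bigD1 (Ordinal ilt)) //= -/(probit_lik _ _).
apply: le_trans (probit_lik_le_gauss m0 zo zm).
rewrite ler_piMr ?probit_lik_ge0 //.
by apply: prodr_ile1 => j _; rewrite probit_lik_ge0 probit_lik_le1.
Qed.

Lemma prod_normal_fun n (m : R) (c : 'I_n -> R) : m != 0 ->
  \prod_(k < n) normal_fun 0 m^-1 (c k) = expR (- (m ^+ 2 * \sum_k c k ^+ 2) / 2).
Proof.
move=> m0; rewrite -expR_sum; congr expR.
rewrite mulr_sumr -sumrN mulr_suml; apply: eq_bigr => k _.
by rewrite subr0 -mulr_natr; field.
Qed.

Lemma posterior_proper_of_cover Xs Ys v Q n : (Q = 0 \/ posdef Q) ->
  (forall s : {ffun 'I_p -> bool},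
     exists2 i, (i < n)%N & orthant s (signed_row (Ys i) (Xs i))) ->
  posterior_proper Xs Ys v Q n.
Proof.
move=> HQ cover; have [idx idxn idxo] := fin_all_exists2 cover.
pose z (s : {ffun 'I_p -> bool}) := signed_row (Ys (idx s)) (Xs (idx s)).
have /filter_ex [m [m0 zm]] :
    \forall m \near 0^'+, 0 < m /\ forall sk, m <= `|z sk.1 0 sk.2|.
  near=> m; split; first by near: m; exact: nbhs_right_gt.
  near: m; apply: filter_forall => -[s k]; apply: nbhs_right_le.
  by rewrite normr_gt0 (orthant_neq0 k (idxo s)).
have mN0 : m^-1 != 0 by rewrite invr_neq0 // gt_eqF.
rewrite /posterior_proper /leb_int_Rp.
apply: (@le_lt_trans _ _ (iter_leb_int p
  (fun b => (1 * \prod_(k < p) normal_fun 0 m^-1 (b k))%:E))).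
  apply: le_iter_leb_int => b; rewrite lee_fin ?probit_post_ge0 // mul1r.
  set c := \col_(k < p) b k; pose s : {ffun 'I_p -> bool} := [ffun k => c k 0 < 0].
  apply: le_trans (probit_post_le_gauss v HQ m0 (idxn s) (idxo s) (fun k => zm (s, k))) _.
  by rewrite -prod_normal_fun ?gt_eqF //; under eq_bigr do rewrite mxE.
rewrite (iter_leb_int_prod _ (normal_fun_ge0 0 m^-1) (measurable_normal_fun 0 m^-1)
  (integral_normal_fun mN0)) //.
exact: ltry.
Unshelve. all: by end_near.
Qed.

End posterior_bound.

Section orthant_measurability.
Context {R : realType} {p : nat}.

Lemma measurable_orthant (s : 'I_p -> bool) : measurable (orthant s : set (Rvec R p)).
Proof.
have -> : orthant s = \bigcap_(k in [set: 'I_p])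
    (fun x : 'rV[R]_p => x 0 k) @^-1` (if s k then `]0, +oo[ else `]-oo, 0[).
  apply/seteqP; split => [x xs k _|x xs k]; [move: (xs k)|move: (xs k I)];
    by case: (s k); rewrite /= in_itv /= ?andbT.
apply: fin_bigcap_measurable => [|k _]; first exact: finite_finset.
apply: sub_gen_smallest; apply: open_comp => [x _|]; first exact: coord_continuous.
by case: (s k); [exact: interval_open|exact: interval_open].
Qed.

Definition signed_orthant (s : 'I_p -> bool) : set (Rvec R p * R) :=
  [set xy | orthant s (signed_row xy.2 xy.1)].

Lemma measurable_signed_orthant s : measurable (signed_orthant s).
Proof.
have -> : signed_orthant s =
    (orthant s `*` [set 1]) `|` (orthant (negb \o s) `*` ~` [set 1]).
  rewrite -orthantN; apply/seteqP; split => -[x y]; rewrite /signed_orthant /signed_row /=.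
    by case: eqP => [->|y1] xs; [left|right].
  by case=> -[xs y1]; [rewrite y1 eqxx|case: eqP].
by apply: measurableU; apply: measurableX;
  [exact: measurable_orthant| |exact: measurable_orthant|exact: measurableC].
Qed.

End orthant_measurability.

Lemma le_geometric_eq0 {R : realType} (e : \bar R) (r : R) :
  (0 <= e)%E -> 0 <= r -> r < 1 -> (forall n, e <= (r ^+ n)%:E)%E -> e = 0%E.
Proof.
move=> e0 r0 r1 le_e.
have efin : e \is a fin_num by rewrite ge0_fin_numE // (le_lt_trans (le_e 0%N)) ?ltry.
rewrite -(fineK efin); congr EFin; apply/eqP; rewrite eq_le fine_ge0 // andbT.
have cvr : (GRing.exp r : R ^nat) @ \oo --> 0 by apply: cvg_expr; rewrite ger0_norm.
rewrite -(cvg_lim _ cvr) //; apply: limr_ge; first by apply/cvg_ex; exists 0.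
by near=> n; rewrite -lee_fin fineK.
Unshelve. all: by end_near.
Qed.

Section positive_integral.
Context {R : realType} {d : measure_display} {T : measurableType d}.
Context (mu : {measure set T -> \bar R}).
Local Open Scope ereal_scope.

Lemma integral_gt0 (A : set T) (f : T -> R) :
  measurable A -> measurable_fun setT f -> (forall t, (0 < f t)%R) -> 0 < mu A ->
  0 < \int[mu]_(t in A) (f t)%:E.
Proof.
move=> mA mf f0 muA.
have mfA : measurable_fun A (fun t => (f t)%:E).
  by apply/measurable_EFinP; exact: measurable_funTS.
rewrite lt0e integral_ge0 ?andbT => [|t _]; last by rewrite lee_fin ltW.
apply/eqP => int0.
have [N [mN muN0 AN]] : {ae mu, forall t, A t -> (f t)%:E = 0}.
  apply: (ae_eq_integral_abs mu mA mfA).1; rewrite -int0.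
  by apply: eq_integral => t _; rewrite gee0_abs // lee_fin ltW.
have : mu A <= mu N.
  apply: le_measure; rewrite ?inE // => t At; apply: AN => /(_ At) /eqP.
  by rewrite eqe gt_eqF.
by rewrite muN0 leNgt muA.
Qed.

End positive_integral.

Section iid_sequence.
Context {R : realType} {d : measure_display} {T : measurableType d}.
Context (P : probability T R).
Local Open Scope ereal_scope.

Lemma probability_setD_integral (A E : set T) (g : T -> R) :
  measurable A -> measurable E -> measurable_fun setT g ->
  (forall t, (0 <= g t <= 1)%R) ->
  P (A `&` E) = \int[P]_(t in A) (g t)%:E ->
  P (A `\` E) = \int[P]_(t in A) (1 - g t)%:E.
Proof.
move=> mA mE mg g01 PAE.
have mgA : measurable_fun A g by exact: measurable_funTS.
have int_fin : \int[P]_(t in A) (g t)%:E \is a fin_num.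
  by rewrite -PAE fin_num_measure //; exact: measurableI.
have PA : P A = \int[P]_(t in A) (1 - g t)%:E + \int[P]_(t in A) (g t)%:E.
  rewrite -ge0_integralD //; first last.
  - exact/measurable_EFinP.
  - by move=> t _; have /andP[] := g01 t; rewrite lee_fin.
  - by apply/measurable_EFinP; apply: measurable_funB.
  - by move=> t _; have /andP[_] := g01 t; rewrite lee_fin subr_ge0.
  rewrite -[LHS]mul1e -integral_cst //; apply: eq_integral => t _.
  by rewrite /= -EFinD subrK.
by rewrite -[LHS](addeK _ int_fin) -PAE -measureDI // PAE -[RHS](addeK _ int_fin) -PA.
Qed.

(* The first [n] trials all miss [C] with probability [(1 - P (Z 0 @^-1` C)) ^+ n]. *)
Lemma iid_ae_exists_hit d' (U : measurableType d') (Z : nat -> T -> U) (C : set U) :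
  (forall i, measurable_fun setT (Z i)) -> indep_seq P Z -> ident_distr P Z ->
  measurable C -> 0 < P (Z 0%N @^-1` C) ->
  {ae P, forall t, exists i, C (Z i t)}.
Proof.
move=> mZ Zindep Zident mC PC.
have mZ0C : measurable (Z 0%N @^-1` C) by rewrite -[X in measurable X]setTI; exact: mZ.
have mZCc i : measurable (Z i @^-1` ~` C).
  by rewrite -[X in measurable X]setTI; apply: mZ => //; exact: measurableC.
have Cfin : P (Z 0%N @^-1` C) \is a fin_num by exact: fin_num_measure.
set q := fine (P (Z 0%N @^-1` C)).
have q0 : (0 < q)%R by rewrite /q fine_gt0 // PC /= ltey_eq Cfin.
have q1 : (q <= 1)%R by rewrite /q -lee_fin fineK // probability_le1.
have PZCc i : P (Z i @^-1` ~` C) = (1 - q)%:E.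
  rewrite Zident; last exact: measurableC.
  by rewrite preimage_setC probability_setC // EFinB /q fineK.
exists (\bigcap_i Z i @^-1` ~` C); split.
- exact: bigcapT_measurable.
- apply: (@le_geometric_eq0 _ _ (1 - q)) => //; rewrite ?subr_ge0 ?ltrBlDr ?ltrDl // => n.
  apply: (@le_trans _ _ (P (\bigcap_(i in [set` index_iota 0 n]) Z i @^-1` ~` C))).
    apply: le_measure; rewrite ?inE; [exact: bigcapT_measurable| |by move=> t tC i _; exact: tC].
    by apply: bigcap_measurableType => i _.
  rewrite Zindep; [|exact: iota_uniq|by move=> i; exact: measurableC].
  under eq_bigr do rewrite PZCc.
  by rewrite prodEFin prodr_const_nat subn0.
- by move=> t /= nohit i _ Ci; apply: nohit; exists i.
Qed.

End iid_sequence.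

Section probit_model.
Context {R : realType} {d : measure_display} {T : measurableType d}.
Context (P : probability T R) {p : nat}.
Variables (X : T -> Rvec R p) (Y : T -> R) (G : Rvec R p -> R).
Hypotheses (mX : measurable_fun setT X) (mY : measurable_fun setT Y).
Hypotheses (mG : measurable_fun setT G) (G01 : forall x, 0 < G x < 1).
Hypothesis XYG : forall B : set (Rvec R p), measurable B ->
  P (X @^-1` B `&` Y @^-1` [set 1]) = (\int[P]_(t in X @^-1` B) (G (X t))%:E)%E.
Local Open Scope ereal_scope.

(* [signed_row Y X] is in the orthant when [X] is and [Y = 1], which has
   probability [\int G > 0], or when [- X] is and [Y <> 1], which has
   probability [\int (1 - G) > 0]. *)
Lemma signed_orthant_prob_gt0 (s : 'I_p -> bool) :
  0 < P (X @^-1` (orthant s `|` [set x : 'rV[R]_p | orthant s (- x)%R])) ->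
  0 < P ((fun t => (X t, Y t)) @^-1` signed_orthant s).
Proof.
rewrite orthantN preimage_setU => PXs.
have mXpre B : measurable B -> measurable (X @^-1` B).
  by move=> mB; rewrite -[X in measurable X]setTI; exact: mX.
have mA := mXpre _ (measurable_orthant s).
have mB := mXpre _ (measurable_orthant (negb \o s)).
have mY1 : measurable (Y @^-1` [set 1%R]) by rewrite -[X in measurable X]setTI; exact: mY.
set E := (fun t => (X t, Y t)) @^-1` signed_orthant s.
have mE : measurable E.
  rewrite -[X in measurable X]setTI; apply: measurable_fun_pair => //.
  exact: measurable_signed_orthant.
have mGX : measurable_fun setT (G \o X) by exact: measurableT_comp.
pose O s' : set (Rvec R p) := orthant s'.
have [PA|PB] : 0 < P (X @^-1` O s) \/ 0 < P (X @^-1` O (negb \o s)).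
  apply/orP; rewrite !lt0e !measure_ge0 !andbT -negb_and.
  apply/negP => /andP[/eqP A0 /eqP B0]; move: PXs; rewrite lt0e => /andP[+ _].
  by rewrite -measure_le0 -A0 -[X in _ <= X]adde0 -B0 measureU2.
- have sub : X @^-1` O s `&` Y @^-1` [set 1%R] `<=` E.
    by move=> t [xs /= y1]; rewrite /E /signed_orthant /signed_row /= y1 eqxx.
  apply: (@lt_le_trans _ _ (P (X @^-1` O s `&` Y @^-1` [set 1%R]))); last first.
    by apply: le_measure sub; rewrite inE //; exact: measurableI.
  rewrite XYG; last exact: measurable_orthant.
  by apply: integral_gt0 => // t; have /andP[] := G01 (X t).
- have sub : X @^-1` O (negb \o s) `\` Y @^-1` [set 1%R] `<=` E.
    move=> t [xs /= /eqP/negbTE y1]; rewrite /E /signed_orthant /signed_row /= y1.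
    by move: xs; rewrite /O -orthantN.
  apply: (@lt_le_trans _ _ (P (X @^-1` O (negb \o s) `\` Y @^-1` [set 1%R]))); last first.
    by apply: le_measure sub; rewrite inE //; exact: measurableD.
  rewrite (probability_setD_integral mB mY1 mGX) => [|t|]; last first.
  + exact: (XYG (measurable_orthant (negb \o s))).
  + by have /andP[/ltW -> /ltW ->] := G01 (X t).
  apply: integral_gt0 => // [|t]; first exact: measurable_funB.
  by have /andP[_] := G01 (X t); rewrite subr_gt0.
Qed.

End probit_model.

Theorem proposition11 (R : realType) (d : measure_display) (T : measurableType d)
  (P : probability T R) (p : nat) (v : 'cV[R]_p) (Q : 'M[R]_p)
  (X : nat -> T -> Rvec R p) (Y : nat -> T -> R) :
  (0 < p)%N ->
  (Q = 0 \/ posdef Q) ->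
  (* measurability, Y_i in {0,1} *)
  (forall i, measurable_fun setT (X i)) ->
  (forall i, measurable_fun setT (Y i)) ->
  (forall i t, Y i t = 0 \/ Y i t = 1) ->
  (* (A1) i.i.d. pairs, Y_i | X_i ~ Bernoulli(G(X_i)) with G measurable into (0,1) *)
  indep_seq P (fun i t => (X i t, Y i t) : (Rvec R p * R)%type) ->
  ident_distr P (fun i t => (X i t, Y i t) : (Rvec R p * R)%type) ->
  (exists G : Rvec R p -> R,
     [/\ measurable_fun setT G, (forall x, 0 < G x < 1) &
       forall i (B : set (Rvec R p)), measurable B ->
         P (X i @^-1` B `&` Y i @^-1` [set 1]) =
         (\int[P]_(t in X i @^-1` B) (G (X i t))%:E)%E]) ->
  (* (A2) E X_1 X_1^T finite and positive definite *)
  (forall k l : 'I_p,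
     P.-integrable setT (fun t => ((X 0 t : 'rV[R]_p) 0 k * (X 0 t : 'rV[R]_p) 0 l)%:E)) ->
  posdef (\matrix_(k < p, l < p)
            fine (\int[P]_t ((X 0 t : 'rV[R]_p) 0 k * (X 0 t : 'rV[R]_p) 0 l)%:E)%E) ->
  (* (A3) orthant condition *)
  (forall (s : 'I_p -> bool) (beta : 'cV[R]_p), beta != 0 ->
     (0 < P [set t | ((\1_(orthant s) (X 0 t : 'rV[R]_p)
                      + \1_(orthant s) (- (X 0 t : 'rV[R]_p)))
                     * ((X 0 t : 'rV[R]_p) *m beta) 0 0 != 0)%R])%E) ->
  (* conclusion: a.s., the posterior is proper for all sufficiently large n *)
  {ae P, forall t, exists N : nat, forall n : nat, (N <= n)%N ->
     posterior_proper (fun i => (X i t : 'rV[R]_p)) (fun i => Y i t) v Q n}.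
Proof.
move=> p0 HQ mX mY _ XYindep XYident [G [mG G01 XYG]] _ _ A3.
pose Z i t := (X i t, Y i t).
have hit (s : {ffun 'I_p -> bool}) : {ae P, forall t, exists i, signed_orthant s (Z i t)}.
  apply: iid_ae_exists_hit => //; first by move=> i; exact: measurable_fun_pair.
    exact: measurable_signed_orthant.
  apply: (signed_orthant_prob_gt0 (mX 0%N) (mY 0%N) mG G01 (XYG 0%N)).
  have e0 : delta_mx (Ordinal p0) 0 != 0 :> 'cV[R]_p.
    by apply/eqP => /matrixP/(_ (Ordinal p0) 0)/eqP; rewrite !mxE !eqxx oner_eq0.
  have := A3 s _ e0; set S := (X in P X) => PS.
  suff -> : X 0%N @^-1` (orthant s `|` [set x | orthant s (- x)]) = S by [].
  by apply/seteqP; split => t; rewrite /S /= => /orthant_indicator_neq0.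
apply: filterS (filter_forall _ hit) => t hits.
have : \forall n \near \oo, forall s : {ffun 'I_p -> bool},
    exists2 i, (i < n)%N & orthant s (signed_row (Y i t) (X i t)).
  apply: filter_forall => s; have [i hi] := hits s.
  by apply: filterS (nbhs_infty_gt i) => n ilt; exists i.
by case=> N _ HN; exists N => n /HN; exact: posterior_proper_of_cover.
Qed.
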